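(* Consider the Boosted HiPPA setting described in the context, with $\gamma>0$, $\sigma\in(0,\frac1{p\gamma})$, $\vartheta\in(0,1)$, and let $x^k$ be an iterate generated by the algorithm, with direction $d^k\in\mathbb{R}^n$. If $P_k(x^k)\neq x^k$, then there exists $\bar m\in\mathbb{N}_0$ such that, with $\alpha_k=\vartheta^{\bar m}$ and $\hat x^{k+1}=(1-\alpha_k)P_k(x^k)+\alpha_k(x^k+d^k)$, the inequality $$\varphi^{p,\varepsilon_{k+1}}_\gamma(\hat x^{k+1})\le\varphi^{p,\varepsilon_k}_\gamma(x^k)-\sigma\|R^{\varepsilon_k}_\gamma(x^k)\|^p+\varepsilon_k+\varepsilon_{k+1}$$ holds; consequently the backtracking loop terminates after finitely many steps.
   Context: Standing setting. $p>1$; $\varphi:\mathbb{R}^n\to\mathbb{R}\cup\{+\infty\}$ is proper, lsc and bounded from below. For $\gamma>0$: $\operatorname{prox}^p_{\gamma\varphi}(x):=\operatorname{argmin}_y\big(\varphi(y)+\frac1{p\gamma}\|x-y\|^p\big)$, $\varphi^p_\gamma(x):=\inf_y\big(\varphi(y)+\frac1{p\gamma}\|x-y\|^p\big)$. $\{\varepsilon_k\}_{k\ge0},\{\delta_k\}_{k\ge0}$ are non-increasing sequences of positive scalars with $\sum_k\varepsilon_k<\infty$ and $\delta_k\downarrow0$. Prox approximation: for each index $j$ and each point $x$ needed by the algorithm, a point $P_j(x)$ (written $\operatorname{prox}^{p,\varepsilon_j}_{\gamma\varphi}(x)$) is available with $\operatorname{dist}(P_j(x),\operatorname{prox}^p_{\gamma\varphi}(x))<\delta_j$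 and $\varphi(P_j(x))+\frac1{p\gamma}\|x-P_j(x)\|^p<\varphi^p_\gamma(x)+\varepsilon_j$. Define $\varphi^{p,\varepsilon_j}_\gamma(x):=\varphi(P_j(x))+\frac1{p\gamma}\|x-P_j(x)\|^p$ and $R^{\varepsilon_j}_\gamma(x):=x-P_j(x)$. Boosted HiPPA: choose $x^0$, $\gamma>0$, $\sigma\in(0,\frac1{p\gamma})$, $\vartheta\in(0,1)$. At iteration $k$: set $\bar x^k:=P_k(x^k)$; choose a direction $d^k\in\mathbb{R}^n$ (not necessarily a descent direction); for $m=0,1,2,\dots$ set $\alpha_k=\vartheta^m$, $\hat x^{k+1}=(1-\alpha_k)\bar x^k+\alpha_k(x^k+d^k)$, until $\varphi^{p,\varepsilon_{k+1}}_\gamma(\hat x^{k+1})\le\varphi^{p,\varepsilon_k}_\gamma(x^k)-\sigma\|R^{\varepsilon_k}_\gamma(x^k)\|^p+\varepsilon_k+\varepsilon_{k+1}$; then set $x^{k+1}=\hat x^{k+1}$. *)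

From HB Require Import structures.
From mathcomp Require Import all_boot all_order all_algebra.
From mathcomp Require Import all_classical all_reals all_analysis.
Set Implicit Arguments. Unset Strict Implicit. Unset Printing Implicit Defensive.
Import Order.TTheory GRing.Theory Num.Theory.
Import numFieldNormedType.Exports.
Local Open Scope classical_set_scope.
Local Open Scope ring_scope.

Section HiPPA.
Variables (R : realType) (n : nat).

Definition enorm (x : 'rV[R]_n) : R := Num.sqrt (\sum_(i < n) (x ord0 i) ^+ 2).

Definition pen (p gam : R) (x y : 'rV[R]_n) : R :=
  (1 / (p * gam)) * (enorm (x - y)) `^ p.

Definition envelope (phi : 'rV[R]_n -> \bar R) (p gam : R) (x : 'rV[R]_n) : \bar R :=
  ereal_inf [set (phi y + (pen p gam x y)%:E)%E | y in [set: 'rV[R]_n]].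

Definition prox (phi : 'rV[R]_n -> \bar R) (p gam : R) (x : 'rV[R]_n) : set 'rV[R]_n :=
  [set y | forall z, (phi y + (pen p gam x y)%:E <= phi z + (pen p gam x z)%:E)%E].

Definition dist_to_set (y : 'rV[R]_n) (S : set 'rV[R]_n) : R :=
  inf [set enorm (y - z) | z in S].

Definition approx_env (phi : 'rV[R]_n -> \bar R) (p gam : R)
  (P : nat -> 'rV[R]_n -> 'rV[R]_n) (j : nat) (x : 'rV[R]_n) : \bar R :=
  (phi (P j x) + (pen p gam x (P j x))%:E)%E.

Definition resid (P : nat -> 'rV[R]_n -> 'rV[R]_n) (j : nat) (x : 'rV[R]_n) : 'rV[R]_n :=
  x - P j x.

Definition accept (phi : 'rV[R]_n -> \bar R) (p gam sig vth : R) (eps : nat -> R)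
  (P : nat -> 'rV[R]_n -> 'rV[R]_n) (k : nat) (xk dk : 'rV[R]_n) (m : nat) : Prop :=
  let a := vth ^+ m in
  let xhat := (1 - a) *: P k xk + a *: (xk + dk) in
  (approx_env phi p gam P k.+1 xhat <=
     approx_env phi p gam P k xk - (sig * (enorm (resid P k xk)) `^ p)%:E
     + (eps k)%:E + (eps k.+1)%:E)%E.

End HiPPA.

From HB Require Import structures.
From mathcomp Require Import all_boot all_order all_algebra.
From mathcomp Require Import all_classical all_reals all_analysis.
From mathcomp Require Import lra.

Set Implicit Arguments.
Unset Strict Implicit.
Unset Printing Implicit Defensive.
Import Order.TTheory GRing.Theory Num.Theory.
Import numFieldNormedType.Exports.
Local Open Scope classical_set_scope.
Local Open Scope ring_scope.

(* Take y := P_k(x^k). The oracle at index k+1 and the definition of the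
   envelope give phi^{p,eps_{k+1}}(xhat) < phi(y) + pen(xhat, y) + eps_{k+1},
   while phi^{p,eps_k}(x^k) = phi(y) + pen(x^k, y) with
   pen(x^k, y) >= sigma ||R(x^k)||^p because sigma < 1/(p gamma).  Hence the
   test holds as soon as pen(xhat, y) <= eps_k, and
   pen(xhat, y) = alpha^p pen(x^k + d^k, y) <= alpha pen(x^k + d^k, y) tends to
   0 with alpha = theta^m.  Backtracking stops at the least such m. *)

Lemma ex_minn_prop (Q : nat -> Prop) :
  (exists m, Q m) -> exists m, Q m /\ forall j, (j < m)%N -> ~ Q j.
Proof.
move=> [m0 Qm0]; have exQb : exists m, `[< Q m >] by exists m0; apply/asboolP.
case: (ex_minnP exQb) => m /asboolP Qm minm; exists m; split=> // j jm Qj.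
by have := minm j (asboolT Qj); rewrite leqNgt jm.
Qed.

Section Penalty.
Variables (R : realType) (n : nat).
Implicit Types (p gam a vth e : R) (x y z v : 'rV[R]_n).

Lemma enorm_ge0 v : 0 <= enorm v.
Proof. exact: sqrtr_ge0. Qed.

Lemma enormZ a v : 0 <= a -> enorm (a *: v) = a * enorm v.
Proof.
move=> a0; rewrite /enorm.
under eq_bigr => i _ do rewrite mxE exprMn.
by rewrite -mulr_sumr sqrtrM ?sqr_ge0 // sqrtr_sqr ger0_norm.
Qed.

Lemma pen_ge0 p gam x y : 0 < p -> 0 < gam -> 0 <= pen p gam x y.
Proof.
move=> p0 gam0; apply: mulr_ge0; last exact: powR_ge0.
by rewrite divr_ge0 // ltW // mulr_gt0.
Qed.

Lemma pen_lerp p gam a y z :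
  0 <= a -> pen p gam ((1 - a) *: y + a *: z) y = a `^ p * pen p gam z y.
Proof.
move=> a0; rewrite /pen.
have -> : (1 - a) *: y + a *: z - y = a *: (z - y).
  by rewrite scalerBl scale1r scalerBr addrAC [y - _]addrC addrK addrC.
by rewrite enormZ // powRM ?enorm_ge0 // mulrCA.
Qed.

Lemma pen_lerp_small p gam vth e y z :
  1 <= p -> 0 < gam -> 0 < vth < 1 -> 0 < e ->
  exists m, pen p gam ((1 - vth ^+ m) *: y + vth ^+ m *: z) y <= e.
Proof.
move=> p1 gam0 /andP[vth0 vth1] e0.
have pen0 : 0 <= pen p gam z y by apply: pen_ge0; lra.
have vthm_pen : (fun m => vth ^+ m * pen p gam z y) @ \oo --> 0.
  rewrite -(mul0r (pen p gam z y)); apply: cvgM; last exact: cvg_cst.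
  by apply: cvg_expr; rewrite ger0_norm ?ltW.
have [M _ small_from_M] := cvgr_le _ vthm_pen _ e0.
exists M; have vthM0 : 0 < vth ^+ M by exact: exprn_gt0.
rewrite (pen_lerp _ _ _ _ (ltW vthM0)).
apply: le_trans _ (small_from_M M (leqnn M)).
apply: ler_wpM2r => //; apply: ge1r_powR => //.
by rewrite vthM0 exprn_ile1 ?ltW.
Qed.

Lemma envelope_le_pen (phi : 'rV[R]_n -> \bar R) p gam x y :
  (envelope phi p gam x <= phi y + (pen p gam x y)%:E)%E.
Proof. by apply: ereal_inf_lbound; exists y. Qed.

End Penalty.

Section Backtracking.
Variables (R : realType) (n : nat) (phi : 'rV[R]_n -> \bar R).
Variables (p gam sig vth : R) (eps : nat -> R).
Variables (P : nat -> 'rV[R]_n -> 'rV[R]_n) (k : nat) (xk dk : 'rV[R]_n).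

Hypothesis phiNy : phi (P k xk) != -oo%E.
Hypothesis sig_le : sig <= 1 / (p * gam).
Hypothesis oracle_next :
  forall x, (approx_env phi p gam P k.+1 x <= envelope phi p gam x + (eps k.+1)%:E)%E.

Lemma accept_of_pen_le m :
  pen p gam ((1 - vth ^+ m) *: P k xk + vth ^+ m *: (xk + dk)) (P k xk) <= eps k ->
  accept phi p gam sig vth eps P k xk dk m.
Proof.
rewrite /accept /approx_env /resid; set y := P k xk; set xhat := _ + _ => pen_xhat.
apply: le_trans (oracle_next xhat) _.
apply: le_trans (leeD2r _ (envelope_le_pen _ _ _ _ y)) _.
move: phiNy; case: (phi y) => [r| |] //= _.
rewrite -!(EFinN, EFinD) lee_fin.
have sig_pen : sig * enorm (xk - y) `^ p <= pen p gam xk y.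
  by apply: ler_wpM2r => //; apply: powR_ge0.
lra.
Qed.

Lemma accept_eventually :
  1 <= p -> 0 < gam -> 0 < vth < 1 -> 0 < eps k ->
  exists m, accept phi p gam sig vth eps P k xk dk m.
Proof.
move=> p1 gam0 vth01 eps0.
have [m pen_m] := pen_lerp_small (P k xk) (xk + dk) p1 gam0 vth01 eps0.
by exists m; apply: accept_of_pen_le.
Qed.

End Backtracking.

Theorem theorem9 (R : realType) (n : nat) (phi : 'rV[R]_n -> \bar R)
  (p gam sig vth : R) (eps delta : nat -> R)
  (P : nat -> 'rV[R]_n -> 'rV[R]_n) (k : nat) (xk dk : 'rV[R]_n) :
  1 < p ->
  (* phi : R^n -> R u {+oo} proper, lsc, bounded from below *)
  (forall x, phi x != -oo%E) -> (exists x, phi x != +oo%E) ->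
  lower_semicontinuous phi ->
  (exists c : R, forall x, (c%:E <= phi x)%E) ->
  (* eps, delta : non-increasing positive, sum eps < oo, delta -> 0 *)
  (forall j, 0 < eps j) -> (forall j, eps j.+1 <= eps j) -> cvgn (series eps) ->
  (forall j, 0 < delta j) -> (forall j, delta j.+1 <= delta j) -> delta @ \oo --> 0 ->
  (* parameters *)
  0 < gam -> 0 < sig -> sig < 1 / (p * gam) -> 0 < vth -> vth < 1 ->
  (* inexact prox oracle *)
  (forall j x, dist_to_set (P j x) (prox phi p gam x) < delta j /\
               (approx_env phi p gam P j x < envelope phi p gam x + (eps j)%:E)%E) ->
  P k xk != xk ->
  exists mbar : nat,
    accept phi p gam sig vth eps P k xk dk mbar /\
    (forall m, (m < mbar)%N -> ~ accept phi p gam sig vth eps P k xk dk m).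
Proof.
move=> p1 phiNy _ _ _ eps0 _ _ _ _ _ gam0 _ sig_lt vth0 vth1 oracle _.
have oracle_next x :
    (approx_env phi p gam P k.+1 x <= envelope phi p gam x + (eps k.+1)%:E)%E.
  by have [_ /ltW] := oracle k.+1 x.
apply: ex_minn_prop; apply: accept_eventually oracle_next _ _ _ _ => //.
- exact: ltW.
- exact: ltW.
- by rewrite vth0 vth1.
Qed.
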